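(* Let $X$ be a scalar random variable with distribution $\pi$ and upper bound $\ell\in\mathbb{R}$ such that $\mathbb{P}_\pi[X\le\ell]=1$. Let $\alpha\in(0,1]$, $\epsilon\in[0,1]$, and define \[ L(x,\mu,t) = t\left(\mu + \frac{1}{\alpha}\max\left\{\frac{x}{t}-\mu,0\right\}\right),\qquad u_b(\mu,t)=L(\ell,\mu,t). \] For $N$ independent samples $x_1,\dots,x_N$ of $X$, let $\zeta^*_N(\mu,t)=\max_{1\le k\le N}L(x_k,\mu,t)$. Then \[ \mathbb{P}^N_{\pi}\left[\mathrm{CVaR}_\alpha(X)\le \inf_{\mu\in\mathbb{R},\ t>0}\zeta^*_N(\mu,t)(1-\epsilon)+u_b(\mu,t)\epsilon\right]\ge 1-(1-\epsilon)^N. \]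
   Context: The Conditional-Value-at-Risk at level $\alpha\in(0,1]$ is $\mathrm{CVaR}_\alpha(X)=\inf_{z\in\mathbb{R}}\ z+\frac{\mathbb{E}_\pi[\max(X-z,0)]}{\alpha}$ (equivalently $\mathbb{E}_\pi[X\mid X\ge \mathrm{VaR}_\alpha(X)]$, where $\mathrm{VaR}_\alpha(X)=\inf\{\zeta : \mathbb{P}_\pi[X\le\zeta]\ge 1-\alpha\}$). $\zeta^*_N(\mu,t)$ is the solution of $\min_\zeta\zeta$ subject to $\zeta\ge L(x_i,\mu,t)$ for all $i$. $\mathbb{P}^N_\pi$ is the $N$-fold product measure governing the i.i.d. sample. *)

From HB Require Import structures.
From mathcomp Require Import all_boot all_order all_algebra.
From mathcomp Require Import all_classical all_reals all_analysis.
Set Implicit Arguments. Unset Strict Implicit. Unset Printing Implicit Defensive.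
Import Order.TTheory GRing.Theory Num.Theory.
Import numFieldNormedType.Exports.
Local Open Scope classical_set_scope.
Local Open Scope ring_scope.

Definition cvar_loss (R : realType) (alpha x mu t : R) : R :=
  t * (mu + alpha^-1 * Num.max (x / t - mu) 0).

Definition CVaR (R : realType) (pi : probability R R) (alpha : R) : \bar R :=
  ereal_inf [set (z%:E + (alpha^-1)%:E *
                   \int[pi]_(x in setT) (Num.max (x - z) 0)%:E)%E | z in [set: R]].

(* zeta*_N(mu,t) = max_k L(x_k, mu, t)  (as an extended real; -oo if N = 0) *)
Definition zeta_star (R : realType) (N : nat) (alpha : R) (xs : 'I_N -> R)
    (mu t : R) : \bar R :=
  (\big[maxe/-oo%E]_(i < N) (cvar_loss alpha (xs i) mu t)%:E)%E.

Definition iid_with_law (d : measure_display) (Omega : measurableType d)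
    (R : realType) (P : probability Omega R) (pi : probability R R) (N : nat)
    (xs : 'I_N -> Omega -> R) : Prop :=
  (forall i, measurable_fun [set: Omega] (xs i)) /\
  forall B : 'I_N -> set R, (forall i, measurable (B i)) ->
    P (\bigcap_(i in [set: 'I_N]) (xs i @^-1` B i)) = (\prod_(i < N) pi (B i))%E.

From mathcomp Require Import all_boot all_order all_algebra.
From mathcomp Require Import all_classical all_reals all_analysis.
From mathcomp Require Import measurable_realfun lra.
Import Order.TTheory GRing.Theory Num.Theory.

(* Call a value r certified when CVaR_alpha(X) <= (1 - eps) L(r, mu, t) + eps u_b(mu, t)
   for all mu and t > 0.  As L is nondecreasing in x, the certified values form an
   up-closed set, and the event of the theorem says exactly that some sample is
   certified (for N > 0, the largest sample is).  Every r with P[X > r] <= eps is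
   certified: evaluating the Rockafellar-Uryasev objective at z = t mu, the hinge
   E[max(X - z, 0)] is at most its value for the two-point law with mass 1 - eps at r
   and eps at ell.  So the uncertified values form a down-closed set on which
   P[X <= y] < 1 - eps; it has probability at most 1 - eps, and by independence all N
   samples fall in it with probability at most (1 - eps)^N. *)

Local Open Scope classical_set_scope.
Local Open Scope ring_scope.

Section real_line.
Context {R : realType}.

Lemma downclosed_measurable (S : set R) :
  (forall x y, S x -> y <= x -> S y) -> measurable S.
Proof.
by move=> Sdown; apply: is_interval_measurable => x y _ Sy z /andP[_ zy]; exact: Sdown Sy zy.
Qed.

Lemma upclosed_measurable (S : set R) :
  (forall x y, S x -> x <= y -> S y) -> measurable S.
Proof.
by move=> Sup; apply: is_interval_measurable => x y Sx _ z /andP[xz _]; exact: Sup Sx xz.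
Qed.

Lemma measurable_le_set (y : R) : measurable [set x : R | x <= y].
Proof. by apply: downclosed_measurable => a b /= ay ba; exact: le_trans ba ay. Qed.

Lemma measurable_gt_set (y : R) : measurable [set x : R | y < x].
Proof. by apply: upclosed_measurable => a b /= ya ab; exact: lt_le_trans ya ab. Qed.

Lemma setC_le_set (y : R) : ~` [set x : R | x <= y] = [set x | y < x].
Proof. by apply/seteqP; split => x /=; rewrite ltNge => /negP. Qed.

Lemma probability_gt_eq0 {P : probability R R} {b : R} :
  P [set x | x <= b] = 1%E -> P [set x | b < x] = 0%E.
Proof.
by move=> Pb; rewrite -setC_le_set probability_setC ?Pb ?subee //; exact: measurable_le_set.
Qed.

(* Unless it contains its supremum, [S] is the increasing union of half-lines
   [(-oo, y_n]] with [y_n] in [S]; continuity from below concludes. *)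
Lemma downclosed_measure_le (mu : {measure set R -> \bar R})
    (S : set R) (c : \bar R) :
  (forall x y, S x -> y <= x -> S y) -> (exists b, ~ S b) -> (0 <= c)%E ->
  (forall y, S y -> (mu [set x | (x <= y)%R] <= c)%E) -> (mu S <= c)%E.
Proof.
move=> Sdown [b Sb] c0 muc.
have [->|/set0P[x0 Sx0]] := eqVneq S set0; first by rewrite measure0.
have supS : has_sup S.
  split; first by exists x0.
  exists b => x Sx; rewrite leNgt; apply/negP => bx; exact/Sb/(Sdown _ _ Sx (ltW bx)).
have [Ss|NSs] := pselect (S (sup S)).
  apply: le_trans (muc _ Ss); apply: le_measure; rewrite ?inE //; last first.
    by move=> x Sx /=; exact: sup_upper_bound.
  - exact: measurable_le_set.
  - exact: downclosed_measurable.
pose y n := sup S - n.+1%:R^-1.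
have Sy n : S (y n).
  have n1V_gt0 : 0 < n.+1%:R^-1 :> R by rewrite invr_gt0.
  have [r Sr ltr] := sup_adherent n1V_gt0 supS.
  exact: Sdown Sr (ltW ltr).
have SE : S = \bigcup_n [set x | x <= y n].
  apply/seteqP; split=> [x Sx|x [n _ xy]]; last exact: Sdown (Sy n) xy.
  have [k ltk] : exists k, x < y k.
    have xs : x < sup S.
      by rewrite lt_neqAle sup_upper_bound // andbT; apply: contra_notN NSs => /eqP <-.
    by have [k] := ltr_add_invr xs; exists k; rewrite ltrBrDr.
  by exists k => //=; exact: ltW.
have yI : nondecreasing_seq y.
  by move=> m n mn; rewrite lerD2l lerN2 lef_pV2 ?posrE // ler_nat.
have mS : measurable (\bigcup_n [set x | x <= y n]).
  by rewrite -SE; exact: downclosed_measurable.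
have half_lines_nd : nondecreasing_seq (fun n => [set x | x <= y n]).
  by move=> m n mn; apply/subsetPset => x /= xm; exact: le_trans xm (yI _ _ mn).
have := nondecreasing_cvg_mu (mu := mu) (fun n => measurable_le_set (y n)) mS half_lines_nd.
rewrite -SE => /cvge_to_le; apply; near=> n; exact: muc.
Unshelve. all: by end_near.
Qed.

Lemma integral_nondecreasing_le (pi : probability R R) (h : R -> R)
    (a b p : R) :
  {homo h : x y / x <= y} -> (forall x, 0 <= h x) -> a <= b ->
  pi [set x | b < x] = 0%E -> (pi [set x | (a < x)%R] <= p%:E)%E ->
  (\int[pi]_x (h x)%:E <= ((1 - p) * h a + p * h b)%:E)%E.
Proof.
move=> h_nd h_ge0 ab pib pia.
set A := [set x | a < x]; set D := h b - h a.
have D_ge0 : 0 <= D by rewrite subr_ge0 h_nd.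
have mA : measurable A := measurable_gt_set a.
have m1A : measurable_fun setT (fun x => (\1_A x)%:E : \bar R).
  by apply/measurable_EFinP; exact: measurable_indic.
have step_ge0 x : 0 <= D * \1_A x by rewrite mulr_ge0 // indicE ler0n.
have m_step : measurable_fun setT (fun x => (D * \1_A x)%:E : \bar R).
  by apply/measurable_EFinP; apply: measurable_funM => //; apply/measurable_EFinP.
have h_le_step : {ae pi, forall x, h x <= h a + D * \1_A x}.
  exists [set x | b < x]; split; first exact: measurable_gt_set.
    by rewrite pib.
  move=> x /= h_gt; rewrite ltNge; apply/negP => xb; apply: h_gt.
  rewrite indicE; have [xA|xA] := boolP (x \in A).
    by rewrite mulr1 addrC subrK h_nd.
  by rewrite mulr0 addr0 h_nd // leNgt; apply: contraNN xA => ?; rewrite inE.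
apply: le_trans (_ : \int[pi]_x ((h a)%:E + (D * \1_A x)%:E) <= _)%E.
  apply: ae_ge0_le_integral => //.
  - by move=> x _; rewrite lee_fin.
  - apply/measurable_EFinP; exact: nondecreasing_measurable.
  - by move=> x _; rewrite -EFinD lee_fin addr_ge0.
  - exact: emeasurable_funD.
  - by apply: filterS h_le_step => x hx _; rewrite -EFinD lee_fin.
rewrite ge0_integralD // => [|x _|x _]; rewrite ?lee_fin //.
rewrite integral_cst //= (probability_setT pi) mule1.
under eq_integral do rewrite EFinM.
rewrite ge0_integralZl_EFin // ?integral_indic // ?setIT.
apply: le_trans (_ : (h a)%:E + D%:E * p%:E <= _)%E.
  by rewrite leeD2l // lee_wpmul2l // lee_fin.
by rewrite -EFinM -EFinD lee_fin /D; lra.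
Qed.

End real_line.

Lemma prode_le_expe (R : realType) n (a : \bar R) (c : R) :
  (0 <= a)%E -> (a <= c%:E)%E -> (\prod_(i < n) a <= (c ^+ n)%:E)%E.
Proof.
move=> a_ge0 a_le; elim: n => [|n IHn]; first by rewrite big_ord0 expr0.
rewrite big_ord_recr exprSr EFinM /=; apply: lee_pmul => //.
exact: prode_ge0.
Qed.

Section cvar_loss.
Context {R : realType}.
Implicit Types alpha x mu t : R.

Lemma cvar_lossE alpha x mu t : 0 < t ->
  cvar_loss alpha x mu t = t * mu + alpha^-1 * Num.max (x - t * mu) 0.
Proof.
move=> t_gt0; rewrite /cvar_loss mulrDr mulrCA maxr_pMr ?ltW // mulr0.
by rewrite mulrBr mulrCA divff ?gt_eqF // mulr1.
Qed.

Lemma cvar_loss_nondecreasing alpha mu t : 0 < alpha -> 0 < t ->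
  {homo (fun x => cvar_loss alpha x mu t) : x y / x <= y}.
Proof.
move=> alpha_gt0 t_gt0 x y xy; rewrite !cvar_lossE // lerD2l.
apply: ler_wpM2l; first by rewrite invr_ge0 ltW.
by rewrite ge_max !le_max lexx !orbT lerD2r xy.
Qed.

Lemma CVaR_le_mixture (pi : probability R R) alpha eps ell r mu t :
  pi [set x | x <= ell] = 1%E -> 0 < alpha -> 0 <= eps <= 1 -> 0 < t ->
  (pi [set x | (r < x)%R] <= eps%:E)%E ->
  (CVaR pi alpha <=
     ((1 - eps) * cvar_loss alpha r mu t + eps * cvar_loss alpha ell mu t)%:E)%E.
Proof.
move=> pi_ell alpha_gt0 /andP[eps_ge0 eps_le1] t_gt0.
have pi_gt_ell := probability_gt_eq0 pi_ell.
wlog r_le_ell : r / r <= ell => [wlog_r pi_r|pi_r].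
  have [/wlog_r|ell_lt_r] := leP r ell; first exact.
  apply: le_trans (wlog_r ell (lexx _) _) _; first by rewrite pi_gt_ell lee_fin.
  rewrite lee_fin lerD2r; apply: ler_wpM2l; first by rewrite subr_ge0.
  by apply: cvar_loss_nondecreasing => //; exact: ltW.
set z := t * mu; pose h x := Num.max (x - z) 0.
have h_nd : {homo h : x y / x <= y}.
  by move=> x y xy; rewrite /h ge_max !le_max lexx !orbT lerD2r xy.
have h_ge0 x : 0 <= h x by rewrite /h le_max lexx orbT.
apply: le_trans (_ : (z%:E + alpha^-1%:E * \int[pi]_x (h x)%:E) <= _)%E.
  by apply: ereal_inf_lbound; exists z.
apply: le_trans (_ : z%:E + alpha^-1%:E * ((1 - eps) * h r + eps * h ell)%:E <= _)%E.
  rewrite leeD2l //; apply: lee_wpmul2l; first by rewrite lee_fin invr_ge0 ltW.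
  exact: integral_nondecreasing_le.
by rewrite -EFinM -EFinD lee_fin !cvar_lossE // -/z -/(h r) -/(h ell); lra.
Qed.

Lemma loss_le_zeta_star n (xs : 'I_n -> R) alpha mu t i :
  ((cvar_loss alpha (xs i) mu t)%:E <= zeta_star alpha xs mu t)%E.
Proof. exact: le_bigmax. Qed.

Lemma zeta_star_le_loss n (xs : 'I_n -> R) alpha mu t j :
  0 < alpha -> 0 < t -> (forall i, xs i <= xs j) ->
  (zeta_star alpha xs mu t <= (cvar_loss alpha (xs j) mu t)%:E)%E.
Proof.
move=> alpha_gt0 t_gt0 xs_le; apply: bigmax_le => [|i _]; first exact: leNye.
by rewrite lee_fin; exact: cvar_loss_nondecreasing.
Qed.

End cvar_loss.

Section certified_samples.
Context {R : realType} (pi : probability R R) (alpha eps ell : R).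
Hypotheses (pi_ell : pi [set x | x <= ell] = 1%E) (alpha_gt0 : 0 < alpha)
  (eps01 : 0 <= eps <= 1).

Definition mixture_bounds (Z : R -> R -> \bar R) : set (\bar R) :=
  [set y | exists mu t : R, 0 < t /\
     y = ((1 - eps)%:E * Z mu t + (eps * cvar_loss alpha ell mu t)%:E)%E].

Lemma le_ereal_inf_mixture_bounds (Z1 Z2 : R -> R -> \bar R) :
  (forall mu t, 0 < t -> (Z1 mu t <= Z2 mu t)%E) ->
  (ereal_inf (mixture_bounds Z1) <= ereal_inf (mixture_bounds Z2))%E.
Proof.
move=> Z12; apply: le_ereal_inf_tmp => _ [mu [t [t_gt0 ->]]].
apply: le_trans (ereal_inf_lbound _) _; first by exists mu, t.
rewrite leeD2r //; apply: lee_wpmul2l; last exact: Z12.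
by rewrite lee_fin subr_ge0; case/andP: eps01.
Qed.

Definition certified (r : R) : Prop :=
  (CVaR pi alpha <=
     ereal_inf (mixture_bounds (fun mu t => (cvar_loss alpha r mu t)%:E)))%E.

Lemma certified_upclosed x y : certified x -> x <= y -> certified y.
Proof.
move=> cx xy; apply: le_trans cx _; apply: le_ereal_inf_mixture_bounds => mu t t_gt0.
by rewrite lee_fin; exact: cvar_loss_nondecreasing.
Qed.

Lemma certified_of_tail r : (pi [set x | (r < x)%R] <= eps%:E)%E -> certified r.
Proof.
move=> pi_r; apply: le_ereal_inf_tmp => _ [mu [t [t_gt0 ->]]].
by rewrite -EFinM -EFinD; exact: CVaR_le_mixture.
Qed.

Lemma measurable_certified : measurable certified.
Proof. by apply: upclosed_measurable => x y; exact: certified_upclosed. Qed.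

Lemma probability_not_certified : (pi (~` certified) <= (1 - eps)%:E)%E.
Proof.
have ell_certified : certified ell.
  by apply: certified_of_tail; rewrite (probability_gt_eq0 pi_ell) lee_fin; case/andP: eps01.
apply: downclosed_measure_le.
- by move=> x y ncx yx cy; apply: ncx; exact: certified_upclosed cy yx.
- by exists ell => /=; apply.
- by rewrite lee_fin subr_ge0; case/andP: eps01.
move=> y /= ncy.
have eps_lt : (eps%:E < pi [set x | (y < x)%R])%E.
  by rewrite ltNge; apply: contra_notN ncy; exact: certified_of_tail.
rewrite -[X in pi X]setCK setC_le_set probability_setC; last exact: measurable_gt_set.
by rewrite EFinB; apply: leeB => //; exact: ltW.
Qed.

End certified_samples.

Section cvar_bound_event.
Context {R : realType} (pi : probability R R) (alpha eps ell : R).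
Context {d : measure_display} {Omega : measurableType d} (N : nat) (xs : 'I_N -> Omega -> R).
Hypotheses (pi_ell : pi [set x | x <= ell] = 1%E) (alpha_gt0 : 0 < alpha)
  (eps01 : 0 <= eps <= 1).

Definition cvar_bound_event : set Omega := [set w |
  (CVaR pi alpha <=
     ereal_inf (mixture_bounds alpha eps ell (zeta_star alpha (fun k => xs k w))))%E].

Let good := certified pi alpha eps ell.

Lemma cvar_bound_event_of_certified w i : good (xs i w) -> cvar_bound_event w.
Proof.
move=> good_i; apply: le_trans good_i _; apply: le_ereal_inf_mixture_bounds => // mu t _.
exact: loss_le_zeta_star.
Qed.

Lemma certified_of_cvar_bound_event w : cvar_bound_event w -> (0 < N)%N ->
  exists i, good (xs i w).
Proof.
move=> Ew N_gt0; pose j := [arg max_(i > Ordinal N_gt0) xs i w]%O.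
exists j; apply: le_trans Ew _; apply: le_ereal_inf_mixture_bounds => // mu t t_gt0.
apply: zeta_star_le_loss => // i; rewrite /j.
by case: arg_maxP => // k _; apply.
Qed.

Lemma measurable_cvar_bound_event :
  (forall i, measurable_fun setT (xs i)) -> measurable cvar_bound_event.
Proof.
move=> mxs; have [N0|N_gt0] := posnP N.
  pose Q := (CVaR pi alpha <= ereal_inf (mixture_bounds alpha eps ell (fun _ _ => -oo)))%E.
  have no_samples w : zeta_star alpha (fun k => xs k w) = fun _ _ => -oo%E.
    apply/funext => mu; apply/funext => t; apply/eqP; rewrite -leeNy_eq.
    by apply: bigmax_le => // i; have := ltn_ord i; rewrite {2}N0.
  have -> : cvar_bound_event = [set _ | Q].
    by apply/seteqP; split=> w; rewrite /cvar_bound_event /= no_samples.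
  by have [/propT|/propF] := pselect Q => ->; [exact: measurableT|exact: measurable0].
have -> : cvar_bound_event = \bigcup_(i in setT) (xs i @^-1` good).
  apply/seteqP; split=> [w /certified_of_cvar_bound_event-/(_ N_gt0)[i good_i]|w [i _]].
    by exists i.
  exact: cvar_bound_event_of_certified.
apply: fin_bigcup_measurable => // i _.
by rewrite -[_ @^-1` _]setTI; apply: mxs => //; exact: measurable_certified.
Qed.

Lemma not_cvar_bound_event_sub :
  ~` cvar_bound_event `<=` \bigcap_(i in setT) (xs i @^-1` (~` good)).
Proof. by move=> w nEw i _ good_i; apply: nEw; exact: cvar_bound_event_of_certified good_i. Qed.

End cvar_bound_event.

Theorem corollary3 (R : realType) (pi : probability R R) (ell alpha eps : R)
  (d : measure_display) (Omega : measurableType d) (P : probability Omega R)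
  (N : nat) (xs : 'I_N -> Omega -> R) :
  pi [set x : R | x <= ell] = 1%E ->
  0 < alpha <= 1 ->
  0 <= eps <= 1 ->
  iid_with_law P pi xs ->
  let E := [set w : Omega |
    (CVaR pi alpha <=
     ereal_inf [set y : \bar R | exists mu t : R, (0 < t)%R /\
                  y = ((1 - eps)%:E * zeta_star alpha (fun k => xs k w) mu t
                       + (eps * cvar_loss alpha ell mu t)%:E)%E])%E] in
  measurable E /\ ((1 - (1 - eps) ^+ N)%:E <= P E)%E.
Proof.
move=> pi_ell /andP[alpha_gt0 _] eps01 [mxs iid] E.
have mE : measurable E by exact: measurable_cvar_bound_event.
split=> //.
have P_notE : (P (~` E) <= ((1 - eps) ^+ N)%:E)%E.
  set bad := ~` certified pi alpha eps ell.
  have m_bad : measurable bad by apply: measurableC; exact: measurable_certified.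
  apply: (@le_trans _ _ (P (\bigcap_(i in [set: 'I_N]) (xs i @^-1` bad)))).
    apply: le_measure; rewrite ?inE; first exact: measurableC.
      apply: fin_bigcap_measurable => // i _.
      by rewrite -[_ @^-1` _]setTI; exact: mxs.
    exact: not_cvar_bound_event_sub.
  rewrite (iid (fun=> bad)) //; apply: prode_le_expe => //.
  exact: probability_not_certified.
move: P_notE; rewrite probability_setC // -(fineK (fin_num_measure P E mE)) -EFinB !lee_fin.
lra.
Qed.
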